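(* Consider the multi-hop multi-channel network and Algorithm 1 described in the context, with parameter $\Delta_{est} \ge \Delta$, and assume $\delta \le \frac{1}{7}$. Let $v$ and $u$ be neighbors, let $f$ be a frame of $v$ and $g$ a frame of $u$ such that the pair $(f,g)$ is aligned. Then the probability that $(f,g)$ covers the link $v \to u$ is at least $\frac{\rho}{8\max(2S,\,3\Delta_{est})}$.
   Context: Network: a finite set of $N$ nodes; each node $u$ has a nonempty available channel set $A_u$; $S=\max_u |A_u|$. Neighborhood on a channel is a symmetric relation; all channels have identical propagation characteristics, so nodes $u,v$ are neighbors on a channel $c$ iff they are neighbors on some channel and $c\in A_u\cap A_v$. For $c\in A_u$, $\deg(u,c)$ is the number of neighbors of $u$ on $c$, and $\Delta=\max_u\max_{c\in A_u}\deg(u,c)$. For neighbors $v,u$ the link $v\to u$ has span $\mathrm{span}(v\to u)=A_u\cap A_v$ and span-ratio $|\mathrm{span}(v\to u)|/|A_u|$; $\rho$ is the minimum span-ratio over all links. A node operates on one channel at a time and cannot transmit and receive simultaneously; a node $u$ listening on channel $c$ throughout a real-time interval $I$ receives a message transmitted on $c$ during $I$ by a neighbor $v$ provided no other neighbor of $u$ on $c$ transmits on $c$ at any time during $I$; there is no collision detection. Clocks: each node $u$ has a clock $C_u$ with $(1-\delta)\Delta t \le C_u(t+\Delta t)-C_u(t)\le(1+\delta)\Delta t$ for all real $t$ and $\Delta t\ge 0$, arbitrary offsets. Algorithm 1 (input: a positive integer $\Delta_{est}$, an upper bound on $\Delta$ known to all nodes): each node starts at an arbitrary real time and partitions its local time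 into consecutive frames of local length $L$, each divided into three consecutive slots of local length $L/3$. At the start of each frame, node $u$ selects a channel $c$ uniformly at random from $A_u$, and with probability $p_u=\min\!\left(\frac12,\frac{|A_u|}{3\Delta_{est}}\right)$ is in transmit mode for that frame, otherwise in receive mode. In transmit mode it transmits on $c$, during each of the three slots of the frame, a message containing its identity and $A_u$; in receive mode it listens on $c$ during the whole frame, and for each message received from a node $v$ containing set $A$ it records $v$ as a neighbor with common channels $A\cap A_u$. All random choices are independent across frames and nodes. Definitions: a pair of frames $(f,g)$ (with $f$ a frame of $v$, $g$ a frame of $u$) is aligned if at least one slot of $f$ lies completely (in real time) within $g$. For a frame $g$ and node $w$, $\mathrm{overlap}(g,w)$ is the set of frames of $w$ overlapping $g$ in real time. The pair $(f,g)$ covers link $v\to u$ on channel $c$ if (i) $v$ transmits on $c$ during $f$, (ii) $u$ listens on $c$ during $g$, and (iii) no neighbor $w\neq v$ of $u$ on $c$ transmits on $c$ during any frame in $\mathrm{overlap}(g,w)$. The pair covers $v\to u$ if it covers it on some channel $c\in\mathrm{span}(v\to u)$. *)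

From HB Require Import structures.
From mathcomp Require Import all_boot all_order all_algebra.
From mathcomp Require Import boolp reals.
Set Implicit Arguments.
Unset Strict Implicit.
Unset Printing Implicit Defensive.
Import Order.TTheory GRing.Theory Num.Theory.
Local Open Scope ring_scope.

Section Network.
Variables (R : realType) (V C : finType).
Variable A : V -> {set C}.
(* "neighbors on some channel"; neighbors on channel c := nbr x y && c \in A x :&: A y *)
Variable nbr : rel V.

(* deg(x,c): number of neighbors of x on channel c (meaningful for c \in A x) *)
Definition deg (x : V) (c : C) : nat := #|[set w | nbr x w & c \in A w]|.
Definition maxdeg : nat := (\max_(x : V) \max_(c in A x) deg x c)%N.
Definition maxchan : nat := (\max_(x : V) #|A x|)%N.
Definition span_ratio (y x : V) : R := #|A x :&: A y|%:R / #|A x|%:R.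
(* rho = minimum span-ratio over all links y -> x (all ratios are <= 1,
   so the neutral element 1 does not affect the minimum when a link exists) *)
Definition rho : R :=
  \big[Num.min/1]_(x : V) \big[Num.min/1]_(y : V | nbr y x) span_ratio y x.

Definition clock_drift (delta : R) (Cl : R -> R) : Prop :=
  forall t dt, 0 <= dt ->
    (1 - delta) * dt <= Cl (t + dt) - Cl t /\ Cl (t + dt) - Cl t <= (1 + delta) * dt.

Variables (Cl : V -> R -> R) (s : V -> R) (L : R).
(* node x starts at real time s x; frame k of x (k = 0,1,...) is the set of
   real times whose local time lies in [C_x(s_x) + kL, C_x(s_x) + (k+1)L] *)
Definition in_frame (x : V) (k : nat) (t : R) : Prop :=
  s x <= t /\ k%:R * L <= Cl x t - Cl x (s x) /\ Cl x t - Cl x (s x) <= k.+1%:R * L.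
Definition in_slot (x : V) (k : nat) (j : 'I_3) (t : R) : Prop :=
  s x <= t /\ k%:R * L + j%:R * L / 3 <= Cl x t - Cl x (s x) /\
  Cl x t - Cl x (s x) <= k%:R * L + j.+1%:R * L / 3.
Definition aligned (v : V) (f : nat) (u : V) (g : nat) : Prop :=
  exists j : 'I_3, forall t, in_slot v f j t -> in_frame u g t.
Definition overlap (u : V) (g : nat) (w : V) (h : nat) : Prop :=
  exists t, in_frame u g t /\ in_frame w h t.

Definition p_tx (Dest : nat) (x : V) : R :=
  Num.min (1 / 2) (#|A x|%:R / (3 * Dest%:R)).
(* probability that node x, in a given frame, picks channel cb.1 and mode cb.2
   (true = transmit, false = receive); channel uniform on A x, independent of mode *)
Definition choice_weight (Dest : nat) (x : V) (cb : C * bool) : R :=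
  (cb.1 \in A x)%:R / #|A x|%:R * (if cb.2 then p_tx Dest x else 1 - p_tx Dest x).
Definition config (K : nat) := {ffun V * 'I_K -> C * bool}.
(* independent choices: product distribution *)
Definition config_weight (Dest K : nat) (cfg : config K) : R :=
  \prod_(i : V * 'I_K) choice_weight Dest i.1 (cfg i).
Definition sel (K : nat) (cfg : config K) (x : V) (k : nat) : option (C * bool) :=
  omap (fun i : 'I_K => cfg (x, i)) (insub k).

Definition covers_on (K : nat) (cfg : config K) (v : V) (f : nat) (u : V) (g : nat)
  (c : C) : Prop :=
  [/\ sel cfg v f = Some (c, true),
      sel cfg u g = Some (c, false) &
      forall w : V, w != v -> nbr u w -> c \in A u -> c \in A w ->
        forall h : nat, overlap u g w h -> sel cfg w h <> Some (c, true)].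
Definition covers (K : nat) (cfg : config K) (v : V) (f : nat) (u : V) (g : nat) : Prop :=
  exists c, c \in A u :&: A v /\ covers_on cfg v f u g c.
Definition prob_covers (Dest K : nat) (v : V) (f : nat) (u : V) (g : nat) : R :=
  \sum_(cfg : config K | `[< covers cfg v f u g >]) config_weight Dest cfg.
End Network.

From HB Require Import structures.
From mathcomp Require Import all_boot all_order all_algebra.
From mathcomp Require Import boolp reals.
From mathcomp Require Import ring lra zify.
Set Implicit Arguments.
Unset Strict Implicit.
Unset Printing Implicit Defensive.
Import Order.TTheory GRing.Theory Num.Theory.
Local Open Scope ring_scope.

(* Fix a common channel c of u and v.  The pair (f, g) covers v -> u on c as
   soon as v transmits on c in f, u listens on c in g, and no other neighbour
   w of u on c transmits on c in a frame overlapping g.  Choices for distinct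
   (node, frame) pairs are independent, so this event has probability
   (p_v / |A_v|) ((1 - p_u) / |A_u|) times a product of factors
   1 - p_w / |A_w| over the interfering frames.  With drift at most 1/7 a
   frame of u overlaps at most three frames of any other node; each of the at
   most Delta_est interferers transmits on c with probability at most
   1 / (3 Delta_est), so by the Weierstrass product inequality the product is
   at least (1 - 1/3)^3 = 8/27.  The events for distinct channels are
   disjoint, and summing over the |A_u :&: A_v| >= rho |A_u| common channels
   gives (4/27) rho / max(2S, 3 Delta_est). *)

Lemma card_ord_spread_le (K n : nat) (P : pred 'I_K) :
  (forall k1 k2, P k1 -> P k2 -> (k2 <= k1 + n)%N) -> (#|P| <= n.+1)%N.
Proof.
move=> spread; have [k0 Pk0|P0] := pickP P; last by rewrite eq_card0.
have [m Pm min_m] := arg_minnP (fun k : 'I_K => nat_of_ord k) Pk0.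
rewrite -[n.+1](card_ord n.+1).
apply: (@leq_card_in _ _ (fun k : 'I_K => inord (k - m) : 'I_n.+1)).
move=> k1 k2 Pk1 Pk2 /(congr1 val) /=.
have := min_m _ Pk1; have := min_m _ Pk2.
have := spread _ _ Pm Pk1; have := spread _ _ Pm Pk2.
move=> le2 le1 ge2 ge1; rewrite !inordK; try lia.
by move=> eq_sub; apply: ord_inj; lia.
Qed.

Lemma weierstrass_prod_ineq (R : realDomainType) (I : finType) (P : pred I) (a : I -> R) :
  (forall i, P i -> 0 <= a i <= 1) ->
  1 - \sum_(i | P i) a i <= \prod_(i | P i) (1 - a i).
Proof.
move=> a01.
suff [] : (1 - \sum_(i | P i) a i <= \prod_(i | P i) (1 - a i)) /\
          0 <= \prod_(i | P i) (1 - a i) <= 1 by [].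
apply: (big_rec2 (fun y x => (1 - y <= x) /\ 0 <= x <= 1)); first by rewrite subr0 lexx ler01.
move=> i y x Pi [le_sum /andP[x0 x1]]; have /andP[ai0 ai1] := a01 i Pi.
by split; [|apply/andP; split]; nra.
Qed.

Lemma sum_ffun_prod_family (R : pzSemiRingType) (I J : finType)
    (w : I -> J -> R) (P : I -> pred J) :
  \sum_(cfg : {ffun I -> J} | [forall i, P i (cfg i)]) \prod_i w i (cfg i)
    = \prod_i \sum_(j | P i j) w i j.
Proof. by rewrite bigA_distr_big_dep; apply: eq_bigl => cfg; apply/forallP/familyP. Qed.

Lemma sum_disjoint_events_le (R : numDomainType) (I T : finType) (w : T -> R)
    (S : pred I) (E : I -> pred T) (B : pred T) :
  (forall t, 0 <= w t) ->
  (forall c t, S c -> E c t -> B t) ->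
  (forall c c' t, E c t -> E c' t -> c = c') ->
  \sum_(c | S c) \sum_(t | E c t) w t <= \sum_(t | B t) w t.
Proof.
move=> w0 EB Einj; rewrite (exchange_big_dep xpredT) //= [leRHS]big_mkcond /=.
apply: ler_sum => t _.
have [c /andP[Sc Ect]|none] := pickP (fun c => S c && E c t); last first.
  by rewrite big_pred0 //; case: ifP.
rewrite (EB c t Sc Ect) (big_pred1 c) // => c'.
apply/andP/eqP => [[_ Ec't]|->]; [exact: Einj Ec't Ect | by split].
Qed.

Section ChoiceWeights.
Variables (R : realType) (V C : finType) (A : V -> {set C}) (Dest : nat).
Implicit Types (x : V) (c : C).

Local Notation p := (p_tx R A Dest).
Local Notation weight := (choice_weight R A Dest).

Lemma p_tx_ge0 x : 0 <= p x.
Proof. by rewrite le_min; apply/andP; split; rewrite ?divr_ge0 ?mulr_ge0. Qed.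

Lemma p_tx_le_half x : p x <= 1 / 2.
Proof. by rewrite ge_min lexx. Qed.

Lemma choice_weight_ge0 x cb : 0 <= weight x cb.
Proof.
have := p_tx_ge0 x; have := p_tx_le_half x.
by rewrite /choice_weight => ? ?; rewrite mulr_ge0 ?divr_ge0 //; case: cb.2; lra.
Qed.

Lemma sum_choice_weight x : A x != set0 -> \sum_cb weight x cb = 1.
Proof.
rewrite -card_gt0 => Ax_gt0.
rewrite -(pair_bigA _ (fun c b => weight x (c, b))) /=.
under eq_bigr do rewrite big_bool /choice_weight /= -mulrDr addrC subrK mulr1.
rewrite -mulr_suml (eq_bigr (fun c => if c \in A x then 1 else 0)).
  by rewrite -big_mkcond sumr_const mulfV // pnatr_eq0 -lt0n.
by move=> c _; case: (c \in A x).
Qed.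

Lemma sum_choice_weight_neq x y : A x != set0 ->
  \sum_(cb | cb != y) weight x cb = 1 - weight x y.
Proof.
move/sum_choice_weight; rewrite (bigD1 y) //= => <-.
by rewrite addrC addrK.
Qed.

Lemma choice_weight_in x c b : c \in A x ->
  weight x (c, b) = (if b then p x else 1 - p x) / #|A x|%:R.
Proof. by move=> Axc; rewrite /choice_weight /= Axc mul1r mulrC. Qed.

Lemma transmit_weight_le x c : weight x (c, true) <= (3 * Dest%:R)^-1.
Proof.
rewrite /choice_weight /=; have [Axc|_] := boolP (c \in A x); last first.
  by rewrite !mul0r invr_ge0 mulr_ge0.
have Ax_gt0 : 0 < #|A x|%:R :> R by rewrite ltr0n card_gt0; apply/set0Pn; exists c.
by rewrite mul1r mulrC ler_pdivrMr // mulrC ge_min lexx orbT.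
Qed.

Lemma transmit_weight_ge x c (M : R) : (0 < Dest)%N -> c \in A x ->
  2 * #|A x|%:R <= M -> 3 * Dest%:R <= M -> M^-1 <= weight x (c, true).
Proof.
move=> Dest_gt0 Axc le_AM le_DM.
have Ax_gt0 : 0 < #|A x|%:R :> R by rewrite ltr0n card_gt0; apply/set0Pn; exists c.
have D_gt0 : 0 < Dest%:R :> R by rewrite ltr0n.
have M_gt0 : 0 < M by lra.
rewrite choice_weight_in // ler_pdivlMr // mulrC le_min; apply/andP; split.
  by rewrite ler_pdivrMr //; lra.
by rewrite ler_pdivrMr // mulrAC ler_pdivlMr ?mulr_gt0 // ler_pM2l.
Qed.

Lemma receive_weight_ge x c : c \in A x -> (2 * #|A x|%:R)^-1 <= weight x (c, false).
Proof.
move=> Axc; have Ax_gt0 : 0 < #|A x|%:R :> R by rewrite ltr0n card_gt0; apply/set0Pn; exists c.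
have := p_tx_le_half x.
by rewrite choice_weight_in // invfM ler_pM2r ?invr_gt0 //; lra.
Qed.

Lemma config_weight_ge0 K (cfg : config V C K) : 0 <= config_weight R A Dest cfg.
Proof. by apply: prodr_ge0 => i _; apply: choice_weight_ge0. Qed.
End ChoiceWeights.

Section NetworkParameters.
Variables (R : realType) (V C : finType) (A : V -> {set C}) (nbr : rel V).

Lemma deg_le_maxdeg x c : c \in A x -> (deg A nbr x c <= maxdeg A nbr)%N.
Proof.
move=> Axc; apply: leq_trans (leq_bigmax_cond c Axc) _.
exact: (leq_bigmax (F := fun x => \max_(c in A x) deg A nbr x c)).
Qed.

Lemma card_le_maxchan x : (#|A x| <= maxchan A)%N.
Proof. exact: (leq_bigmax (F := fun x => #|A x|)). Qed.

Lemma rho_le_span_ratio y x : nbr y x -> rho R A nbr <= span_ratio R A y x.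
Proof. by move=> nyx; apply: le_trans (bigmin_le _ x _) (bigmin_le_cond _ _ nyx). Qed.
End NetworkParameters.

Lemma clock_drift_sub (R : realType) (delta : R) (Cl : R -> R) t1 t2 :
  clock_drift delta Cl -> t1 <= t2 ->
  (1 - delta) * (t2 - t1) <= Cl t2 - Cl t1 <= (1 + delta) * (t2 - t1).
Proof.
move=> drift le_t12; rewrite -subr_ge0 in le_t12.
by have [] := drift t1 _ le_t12; rewrite subrKC => -> ->.
Qed.

Lemma overlap_index_le (R : realType) (V : finType) (Cl : V -> R -> R) (s : V -> R)
    (L delta : R) u g w h1 h2 :
  (forall x, clock_drift delta (Cl x)) -> delta <= 1 / 7 -> 0 < L ->
  overlap Cl s L u g w h1 -> overlap Cl s L u g w h2 -> (h2 <= h1 + 2)%N.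
Proof.
move=> drift small_delta L_gt0 [t1 [[_ u1] [_ w1]]] [t2 [[_ u2] [_ w2]]].
rewrite leqNgt; apply/negP => lt_h; have {lt_h} : h1%:R + 3 <= h2%:R :> R.
  by rewrite -natrD ler_nat; lia.
move: u1 u2 w1 w2; rewrite -!natr1 => u1 u2 w1 w2 le_h.
have : Cl w t1 + 2 * L <= Cl w t2 by nra.
have [le_t12|le_t21] := lerP t1 t2.
  (* u's clock advances at most L from t1 to t2, hence w's clock at most
     (1 + delta) / (1 - delta) L < 2 L *)
  have := clock_drift_sub (drift u) le_t12; have := clock_drift_sub (drift w) le_t12.
  by move=> /andP[_ w12] /andP[u12 _]; nra.
have := clock_drift_sub (drift w) (ltW le_t21) => /andP[w21 _].
have : 0 <= (1 - delta) * (t1 - t2) by rewrite mulr_ge0 // subr_ge0 ?ltW //; lra.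
lra.
Qed.

Lemma card_overlap_frames_le (R : realType) (V : finType) (Cl : V -> R -> R)
    (s : V -> R) (L delta : R) (K : nat) u g w :
  (forall x, clock_drift delta (Cl x)) -> delta <= 1 / 7 -> 0 < L ->
  (#|[pred k : 'I_K | `[< overlap Cl s L u g w k >]]| <= 3)%N.
Proof.
move=> drift small_delta L_gt0.
apply: card_ord_spread_le => k1 k2 /asboolP ov1 /asboolP ov2.
exact: overlap_index_le drift small_delta L_gt0 ov1 ov2.
Qed.

Lemma sel_Ordinal (V C : finType) (K : nat) (cfg : config V C K) x k
    (lt_kK : (k < K)%N) :
  sel cfg x k = Some (cfg (x, Ordinal lt_kK)).
Proof. by rewrite /sel insubT. Qed.

Section CoverEvent.
Variables (R : realType) (V C : finType) (A : V -> {set C}) (nbr : rel V).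
Variables (Cl : V -> R -> R) (s : V -> R) (L : R) (Dest K : nat).
Variables (v u : V) (f g : nat).
Hypotheses (lt_fK : (f < K)%N) (lt_gK : (g < K)%N).

Local Notation weight := (choice_weight R A Dest).

Definition interferer (c : C) (w : V) : bool := [&& w != v, nbr u w & c \in A w].

Definition interfering (c : C) (i : V * 'I_K) : bool :=
  interferer c i.1 && `[< overlap Cl s L u g i.1 i.2 >].

Let vf : V * 'I_K := (v, Ordinal lt_fK).
Let ug : V * 'I_K := (u, Ordinal lt_gK).

(* The covering event on channel c, as one constraint per (node, frame)
   coordinate, so that its probability factorises. *)
Definition cover_constraint (c : C) (i : V * 'I_K) (x : C * bool) : bool :=
  if i == vf then x == (c, true)
  else if i == ug then x == (c, false)
  else interfering c i ==> (x != (c, true)).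

Definition cover_event (c : C) (cfg : config V C K) : bool :=
  [forall i, cover_constraint c i (cfg i)].

Hypotheses (neq_vu : v != u) (nbr_irr_u : ~~ nbr u u).
Hypothesis overlap_lt_K : forall w h, overlap Cl s L u g w h -> (h < K)%N.

Lemma ug_neq_vf : ug != vf.
Proof. by rewrite xpair_eqE eq_sym (negbTE neq_vu). Qed.

Lemma cover_event_channel c cfg : cover_event c cfg -> cfg vf = (c, true).
Proof. by move=> /forallP/(_ vf); rewrite /cover_constraint eqxx => /eqP. Qed.

Lemma cover_event_covers c cfg :
  c \in A u :&: A v -> cover_event c cfg -> covers A nbr Cl s L cfg v f u g.
Proof.
move=> Auvc Ecfg; exists c; split => //.
have /forallP constraint := Ecfg; split.
- by rewrite (sel_Ordinal _ _ lt_fK) (cover_event_channel Ecfg).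
- have := constraint ug; rewrite /cover_constraint (negbTE ug_neq_vf) eqxx => /eqP <-.
  exact: sel_Ordinal.
- move=> w neq_wv nbr_uw Auc Awc h ov_h; have lt_hK := overlap_lt_K ov_h.
  rewrite (sel_Ordinal _ _ lt_hK); have := constraint (w, Ordinal lt_hK).
  rewrite /cover_constraint !xpair_eqE (negbTE neq_wv) /=.
  have -> : (w == u) = false.
    by apply/eqP => eq_wu; rewrite eq_wu (negbTE nbr_irr_u) in nbr_uw.
  have -> /= : interfering c (w, Ordinal lt_hK).
    by rewrite /interfering /interferer neq_wv nbr_uw Awc; apply/asboolP.
  by move=> /eqP neq [] /neq.
Qed.

Hypothesis A_neq0 : forall x, A x != set0.

Lemma prob_cover_event c :
  \sum_(cfg | cover_event c cfg) config_weight R A Dest cfg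
  = weight v (c, true) * weight u (c, false) *
    \prod_(i | interfering c i) (1 - weight i.1 (c, true)).
Proof.
rewrite (sum_ffun_prod_family (fun i => weight i.1) (cover_constraint c)).
rewrite (bigD1 vf) //= (bigD1 ug) //=; last by rewrite ug_neq_vf.
have constraint_vf : cover_constraint c vf =1 pred1 (c, true).
  by move=> x; rewrite /cover_constraint eqxx.
have constraint_ug : cover_constraint c ug =1 pred1 (c, false).
  by move=> x; rewrite /cover_constraint (negbTE ug_neq_vf) eqxx.
rewrite (eq_bigl _ _ constraint_vf) (eq_bigl _ _ constraint_ug) !big_pred1_eq mulrA.
have not_interfering_vf : ~~ interfering c vf by rewrite /interfering /interferer eqxx.
have not_interfering_ug : ~~ interfering c ug.
  by rewrite /interfering /interferer /= (negbTE nbr_irr_u) andbF.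
congr (_ * _); rewrite [RHS]big_mkcond [RHS](bigD1 vf) //=.
rewrite (negbTE not_interfering_vf) mul1r [RHS](bigD1 ug) /=; last by rewrite ug_neq_vf.
rewrite ifN // mul1r.
apply: eq_bigr => i /andP[neq_ivf neq_iug].
rewrite /cover_constraint (negbTE neq_ivf) (negbTE neq_iug).
by case: (interfering c i); rewrite ?sum_choice_weight_neq ?sum_choice_weight ?A_neq0.
Qed.

Hypotheses (Dest_gt0 : (0 < Dest)%N) (maxdeg_le : (maxdeg A nbr <= Dest)%N).

Lemma sum_interferer_weight_le c : c \in A u ->
  \sum_(w | interferer c w) weight w (c, true) <= 1 / 3.
Proof.
move=> Auc; have card_le : (#|interferer c| <= Dest)%N.
  apply: leq_trans (leq_trans (deg_le_maxdeg nbr Auc) maxdeg_le); apply: subset_leq_card.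
  by apply/subsetP => w /and3P[_ nbr_uw Awc]; rewrite inE nbr_uw.
apply: le_trans (ler_sum _ (fun w _ => transmit_weight_le R A Dest w c)) _.
have D_gt0 : 0 < Dest%:R :> R by rewrite ltr0n.
move: card_le; rewrite -(ler_nat R) => card_le.
by rewrite sumr_const -[_ *+ _]mulr_natr mulrC ler_pdivrMr ?mulr_gt0 //; lra.
Qed.

Variable delta : R.
Hypotheses (drift : forall x, clock_drift delta (Cl x)) (small_delta : delta <= 1 / 7).
Hypothesis L_gt0 : 0 < L.

Lemma interference_prod_ge c : c \in A u ->
  8 / 27 <= \prod_(i | interfering c i) (1 - weight i.1 (c, true)).
Proof.
move=> Auc; pose r w := if interferer c w then weight w (c, true) else 0.
have r01 w : 0 <= r w <= 1.
  rewrite /r; case: ifP => _; rewrite ?lexx ?ler01 // choice_weight_ge0 /=.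
  have := transmit_weight_le R A Dest w c; have : (1 <= 3 * Dest%:R :> R).
    by rewrite -natrM ler1n; lia.
  by move=> ge1; move/le_trans; apply; rewrite invf_le1 // (lt_le_trans ltr01).
have frames_le w :
    (1 - r w) ^+ 3 <= \prod_(k | interfering c (w, k)) (1 - weight w (c, true)).
  have /andP[] := r01 w; rewrite /r /interfering /=.
  case: ifP => /= _ r0 r1; last by rewrite subr0 expr1n big_pred0.
  rewrite prodr_const; apply: ler_wiXn2l; [lra | lra |].
  exact: (card_overlap_frames_le s K u g w drift small_delta L_gt0).
have -> : \prod_(i | interfering c i) (1 - weight i.1 (c, true))
    = \prod_w \prod_(k | interfering c (w, k)) (1 - weight w (c, true)).
  by rewrite pair_big_dep; apply: eq_bigl => -[].
have sum_r : \sum_w r w <= 1 / 3 by rewrite -big_mkcond sum_interferer_weight_le.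
have prod_r : 1 - \sum_w r w <= \prod_w (1 - r w) by apply: weierstrass_prod_ineq.
have prod_frames : \prod_w (1 - r w) ^+ 3
    <= \prod_w \prod_(k | interfering c (w, k)) (1 - weight w (c, true)).
  apply: ler_prod => w _; have /andP[_ r1] := r01 w.
  by rewrite frames_le exprn_ge0 // subr_ge0.
apply: le_trans prod_frames; rewrite prodrXl.
have sum_r0 : 0 <= \sum_w r w by apply: sumr_ge0 => w _; have /andP[] := r01 w.
apply: le_trans (_ : (1 - \sum_w r w) ^+ 3 <= _); last first.
  by apply: lerXn2r; rewrite ?nnegrE; lra.
apply: le_trans (_ : (2 / 3) ^+ 3 <= _); first by rewrite !exprS expr0; lra.
by apply: lerXn2r; rewrite ?nnegrE; lra.
Qed.

Lemma prob_cover_event_ge c (M : R) : c \in A u :&: A v ->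
  2 * #|A v|%:R <= M -> 3 * Dest%:R <= M ->
  4 / 27 / (M * #|A u|%:R)
    <= \sum_(cfg | cover_event c cfg) config_weight R A Dest cfg.
Proof.
case/setIP=> Auc Avc le_vM le_DM; rewrite prob_cover_event.
have Au_gt0 : 0 < #|A u|%:R :> R by rewrite ltr0n card_gt0 A_neq0.
have Av_gt0 : 0 < #|A v|%:R :> R by rewrite ltr0n card_gt0 A_neq0.
have -> : 4 / 27 / (M * #|A u|%:R) = M^-1 * (2 * #|A u|%:R)^-1 * (8 / 27).
  by field; apply/andP; split; rewrite ?pnatr_eq0 -?lt0n ?card_gt0 ?A_neq0 //; lra.
have M_gt0 : 0 < M by lra.
have transmit := transmit_weight_ge Dest_gt0 Avc le_vM le_DM.
have receive := receive_weight_ge R Dest Auc.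
apply: ler_pM; rewrite ?interference_prod_ge ?mulr_ge0 ?invr_ge0 //; try lra.
by apply: ler_pM; rewrite ?invr_ge0 //; lra.
Qed.

Lemma prob_covers_ge (M : R) : 2 * #|A v|%:R <= M -> 3 * Dest%:R <= M ->
  span_ratio R A v u / (8 * M) <= prob_covers A nbr Cl s L Dest K v f u g.
Proof.
move=> le_vM le_DM.
have covers_of_event c cfg :
    c \in A u :&: A v -> cover_event c cfg -> `[< covers A nbr Cl s L cfg v f u g >].
  by move=> Auvc Ecfg; apply/asboolP; apply: cover_event_covers Auvc Ecfg.
have event_disjoint c c' cfg : cover_event c cfg -> cover_event c' cfg -> c = c'.
  by move=> /cover_event_channel Ec /cover_event_channel; rewrite Ec => -[].
rewrite /prob_covers; apply: le_trans (sum_disjoint_events_le (S := mem (A u :&: A v))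
  (@config_weight_ge0 R V C A Dest K) covers_of_event event_disjoint).
apply: le_trans (ler_sum _ (fun c Auvc => prob_cover_event_ge Auvc le_vM le_DM)).
have Au_gt0 : 0 < #|A u|%:R :> R by rewrite ltr0n card_gt0 A_neq0.
have M_gt0 : 0 < M by apply: lt_le_trans le_DM; rewrite mulr_gt0 ?ltr0n.
rewrite sumr_const -[_ *+ #|_|]mulr_natr.
have -> : 4 / 27 / (M * #|A u|%:R) * #|A u :&: A v|%:R
    = span_ratio R A v u / (8 * M) * (32 / 27).
  by rewrite /span_ratio; field; rewrite (gt_eqF M_gt0) (gt_eqF Au_gt0).
by apply: ler_peMr; [rewrite !divr_ge0 ?mulr_ge0 ?ler0n ?ltW | lra].
Qed.
End CoverEvent.

Theorem mainTheorem2 (R : realType) (V C : finType) (A : V -> {set C}) (nbr : rel V)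
    (Cl : V -> R -> R) (s : V -> R) (L delta : R) (Dest K : nat)
    (v u : V) (f g : nat) :
  (forall x, A x != set0) ->
  (forall x y, nbr x y = nbr y x) ->
  (forall x, ~~ nbr x x) ->
  (forall x y, nbr x y -> A x :&: A y != set0) ->
  (forall x, clock_drift delta (Cl x)) ->
  delta <= 1 / 7 ->
  0 < L ->
  (0 < Dest)%N ->
  (maxdeg A nbr <= Dest)%N ->
  nbr v u ->
  aligned Cl s L v f u g ->
  (f < K)%N -> (g < K)%N ->
  (forall w h, overlap Cl s L u g w h -> (h < K)%N) ->
  rho R A nbr / (8 * Num.max (2 * (maxchan A)%:R) (3 * Dest%:R))
    <= prob_covers A nbr Cl s L Dest K v f u g.
Proof.
move=> A_neq0 _ nbr_irr _ drift small_delta L_gt0 Dest_gt0 maxdeg_le nbr_vu _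
  lt_fK lt_gK overlap_lt_K.
have neq_vu : v != u by apply: contraNneq (nbr_irr u) => eq_vu; rewrite -{1}eq_vu.
set M := Num.max _ _.
have le_vM : 2 * #|A v|%:R <= M.
  by rewrite le_max ler_pM2l ?ltr0n // ler_nat card_le_maxchan.
have le_DM : 3 * Dest%:R <= M by rewrite le_max lexx orbT.
have M_gt0 : 0 < M by apply: lt_le_trans le_DM; rewrite mulr_gt0 ?ltr0n.
apply: le_trans (prob_covers_ge lt_fK lt_gK neq_vu (nbr_irr u) overlap_lt_K A_neq0
  Dest_gt0 maxdeg_le drift small_delta L_gt0 le_vM le_DM).
by rewrite ler_pM2r ?invr_gt0 ?mulr_gt0 // rho_le_span_ratio.
Qed.
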